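(* Let $\Bbbk$ be a field of characteristic $0$, let $n\ge 2$, and let $(A,\mu,\alpha)$ be an $n$-ary totally Hom-associative algebra over $\Bbbk$ all of whose $n-1$ twisting maps are equal to a single linear map $\alpha\colon A\to A$. Let $[\cdot,\ldots,\cdot]\colon A^{\otimes n}\to A$ be the $n$-commutator bracket of $\mu$. Then $N(A)=(A,[\cdot,\ldots,\cdot],\alpha)$ (all $n-1$ twisting maps equal to $\alpha$) is an $n$-ary Hom-Nambu algebra. Moreover, if $(A,\mu,\alpha)$ is multiplicative, then so is $N(A)$.
   Context: An $n$-ary Hom-algebra $(V,\mu,(\alpha_1,\ldots,\alpha_{n-1}))$ is a $\Bbbk$-vector space $V$ with an $n$-linear map $\mu\colon V^{\otimes n}\to V$ (written $\mu(a_1,\ldots,a_n)=(a_1\cdots a_n)$) and linear maps $\alpha_1,\ldots,\alpha_{n-1}\colon V\to V$ (twisting maps). It is multiplicative if all twisting maps equal one map $\alpha$ and $\alpha\circ\mu=\mu\circ\alpha^{\otimes n}$. For $i\in\{1,\ldots,n-1\}$ the $i$th Hom-associator is the $(2n-1)$-linear map $as^i(a_1,\ldots,a_{2n-1})=(\alpha_1(a_1),\ldots,\alpha_{i-1}(a_{i-1}),(a_i\cdots a_{i+n-1}),\alpha_i(a_{i+n}),\ldots,\alpha_{n-1}(a_{2n-1}))-(\alpha_1(a_1),\ldots,\alpha_i(a_i),(a_{i+1}\cdots a_{i+n}),\alpha_{i+1}(a_{i+n+1}),\ldots,\alpha_{n-1}(a_{2n-1}))$. The Hom-algebra is $n$-ary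 totally Hom-associative if $as^i=0$ for all $i\in\{1,\ldots,n-1\}$. $n$-commutator words: in non-commuting variables $X_1,X_2,\ldots$, set $W_2=\{X_1X_2,-X_2X_1\}$ and for $n>2$, $W_n=\{zX_n,\,-X_nz : z\in W_{n-1}\}$ (so $|W_n|=2^{n-1}$). A word $w=\pm X_{i_1}\cdots X_{i_n}\in W_n$ acts by $w(a_1,\ldots,a_n)=\pm a_{i_1}\otimes\cdots\otimes a_{i_n}$. The $n$-commutator bracket is $[a_1,\ldots,a_n]=\sum_{w\in W_n}\mu(w(a_1,\ldots,a_n))$ (e.g. for $n=3$: $(a_1a_2a_3)-(a_2a_1a_3)-(a_3a_1a_2)+(a_3a_2a_1)$). For an $n$-ary Hom-algebra $(V,[\cdot,\ldots,\cdot],(\alpha_1,\ldots,\alpha_{n-1}))$, the $n$-ary Hom-Jacobian is $J(x_1,\ldots,x_{n-1};y_1,\ldots,y_n)=[\alpha_1(x_1),\ldots,\alpha_{n-1}(x_{n-1}),[y_1,\ldots,y_n]]-\sum_{i=1}^n[\alpha_1(y_1),\ldots,\alpha_{i-1}(y_{i-1}),[x_1,\ldots,x_{n-1},y_i],\alpha_i(y_{i+1}),\ldots,\alpha_{n-1}(y_n)]$, and $V$ is an $n$-ary Hom-Nambu algebra if $J=0$ identically. *)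

From HB Require Import structures.
From mathcomp Require Import all_boot all_order all_algebra.
Set Implicit Arguments. Unset Strict Implicit. Unset Printing Implicit Defensive.
Import GRing.Theory.
Local Open Scope ring_scope.

Section NaryHom.
Variables (R : fieldType) (V : lmodType R).

(* An n-ary operation is a map {ffun 'I_n -> V} -> V (argument i is slot i+1). *)

(* Apply an n-ary operation to the first n values of a sequence f : nat -> V
   (0-based: f 0 is a_1, f 1 is a_2, ...). *)
Definition app {n : nat} (m : {ffun 'I_n -> V} -> V) (f : nat -> V) : V :=
  m [ffun j : 'I_n => f (val j)].

Definition fext {n : nat} (a : {ffun 'I_n -> V}) : nat -> V :=
  fun k => match (insub k : option 'I_n) with Some i => a i | None => 0 end.

Definition upd {n : nat} (a : {ffun 'I_n -> V}) (i : 'I_n) (v : V) :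
  {ffun 'I_n -> V} := [ffun j => if j == i then v else a j].

Definition multilinear {n : nat} (m : {ffun 'I_n -> V} -> V) : Prop :=
  forall (i : 'I_n) (a : {ffun 'I_n -> V}) (c : R) (x y : V),
    m (upd a i (c *: x + y)) = c *: m (upd a i x) + m (upd a i y).

Definition assoc_args (n : nat) (m : {ffun 'I_n -> V} -> V) (alpha : V -> V)
  (p : nat) (a : nat -> V) : nat -> V :=
  fun j => if (j < p)%N then alpha (a j)
           else if (j == p)%N then app m (fun k => a (p + k)%N)
           else alpha (a (j + n - 1)%N).

(* i-th Hom-associator, i in {1,...,n-1} (1-based as in the paper), all
   twisting maps equal to alpha. *)
Definition hom_associator (n : nat) (m : {ffun 'I_n -> V} -> V) (alpha : V -> V)
  (i : nat) (a : nat -> V) : V :=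
  app m (assoc_args m alpha i.-1 a) - app m (assoc_args m alpha i a).

Definition totally_hom_assoc (n : nat) (m : {ffun 'I_n -> V} -> V)
  (alpha : V -> V) : Prop :=
  forall (i : nat) (a : nat -> V), (0 < i < n)%N -> hom_associator m alpha i a = 0.

Definition hom_multiplicative (n : nat) (m : {ffun 'I_n -> V} -> V)
  (alpha : V -> V) : Prop :=
  forall a : {ffun 'I_n -> V}, alpha (m a) = m [ffun j => alpha (a j)].

(* n-commutator words: words k = W_{k+1}, as (sign, list of 0-based variable
   indices); true = sign +, false = sign -. *)
Fixpoint words (k : nat) : seq (bool * seq nat) :=
  match k with
  | 0 => [:: (true, [:: 0%N])]
  | k'.+1 => flatten [seq [:: (w.1, rcons w.2 k); (~~ w.1, k :: w.2)]
                     | w <- words k']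
  end.

Definition commutator (n : nat) (m : {ffun 'I_n -> V} -> V)
  (a : {ffun 'I_n -> V}) : V :=
  \sum_(w <- words n.-1)
    (if w.1 then app m (fun j => fext a (nth 0%N w.2 j))
     else - app m (fun j => fext a (nth 0%N w.2 j))).

(* n-ary Hom-Jacobian with all twisting maps equal to alpha;
   x = (x_1..x_{n-1}) and y = (y_1..y_n) are 0-based. *)
Definition hom_jacobian (n : nat) (b : {ffun 'I_n -> V} -> V) (alpha : V -> V)
  (x y : nat -> V) : V :=
  app b (fun j => if (j < n.-1)%N then alpha (x j) else app b y)
  - \sum_(i < n)
      app b (fun j => if (j < i)%N then alpha (y j)
                      else if (j == i)%N then
                        app b (fun k => if (k < n.-1)%N then x k else y i)
                      else alpha (y j)).

Definition hom_nambu (n : nat) (b : {ffun 'I_n -> V} -> V) (alpha : V -> V) : Prop :=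
  forall x y : nat -> V, hom_jacobian b alpha x y = 0.

End NaryHom.

From HB Require Import structures.
From mathcomp Require Import all_boot all_order all_algebra.
From mathcomp Require Import zify.
Set Implicit Arguments. Unset Strict Implicit. Unset Printing Implicit Defensive.
Import GRing.Theory.
Local Open Scope ring_scope.

(* The n-commutator bracket is the iterated commutator [..[[a_1, a_2], a_3], .., a_n]
   of the free associative ring, evaluated through mu.  Total Hom-associativity makes an
   inner product placed in any slot of an outer one, with alpha applied to the other
   arguments, independent of that slot; hence both sides of the Hom-Jacobian are
   evaluations of formal noncommutative polynomials in x_1, .., x_(n-1), y_1, .., y_n.
   The identity then reduces to the fact that ad X = [X, -], for X = [x_1, .., x_(n-1)],
   is a derivation of iterated commutators, which is the Jacobi identity of the
   associative commutator.  Multiplicativity passes to the bracket since alpha is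
   linear and commutes with mu. *)

Lemma words_perm_iota k w : w \in words k -> perm_eq w.2 (iota 0 k.+1).
Proof.
elim: k w => [|k IHk] w; first by rewrite inE => /eqP ->.
have -> : iota 0 k.+2 = rcons (iota 0 k.+1) k.+1 by rewrite -cats1 -addn1 iotaD.
case/flatten_mapP => w' /IHk w'_perm; rewrite !inE => /orP[] /eqP ->;
  by rewrite ?perm_rcons perm_sym perm_rcons perm_cons perm_sym.
Qed.

Lemma map_ifN (T : eqType) (U : Type) (q : T) (x : U) (g : T -> U) s :
  q \notin s -> [seq if j == q then x else g j | j <- s] = map g s.
Proof. by move=> qNs; apply/eq_in_map => j js; case: eqP js qNs => // -> ->. Qed.

Section FormalSums.
Variables (A : eqType) (M : zmodType).

Definition signed (b : bool) (v : M) : M := if b then v else - v.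

Fact signed_is_zmod_morphism b : zmod_morphism (signed b).
Proof. by case: b => x y; rewrite /= ?opprD. Qed.
HB.instance Definition _ b :=
  GRing.isZmodMorphism.Build M M (signed b) (signed_is_zmod_morphism b).

Lemma signed_negb b v : signed (~~ b) v = - signed b v.
Proof. by case: b; rewrite /= ?opprK. Qed.

Lemma signed_eqb b c v : signed (b == c) v = signed b (signed c v).
Proof. by case: b; case: c; rewrite /= ?opprK. Qed.

Lemma signedC b c v : signed b (signed c v) = signed c (signed b v).
Proof. by case: b; case: c. Qed.

(* A formal sum is a list of signed words over [A]: an unnormalized element of the free
   associative ring on [A].  Two formal sums are [fequiv] when all their additive
   evaluations agree. *)
Definition fsum := seq (bool * seq A).

Definition feval (f : seq A -> M) (F : fsum) : M := \sum_(x <- F) signed x.1 (f x.2).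
Definition fequiv (F G : fsum) := forall f, feval f F = feval f G.

Definition fopp (F : fsum) : fsum := [seq (~~ x.1, x.2) | x <- F].
Definition fsign (b : bool) (F : fsum) : fsum := if b then F else fopp F.
Definition fmul (F G : fsum) : fsum := [seq (x.1 == y.1, x.2 ++ y.2) | x <- F, y <- G].
Definition fone : fsum := [:: (true, [::])].
Definition fletter (a : A) : fsum := [:: (true, [:: a])].
Definition fprod (Fs : seq fsum) : fsum := foldr fmul fone Fs.
Definition fcomm (F G : fsum) : fsum := fmul F G ++ fopp (fmul G F).
Definition fbracket (L : nat -> fsum) (k : nat) : fsum :=
  flatten [seq fsign w.1 (fprod (map L w.2)) | w <- words k].
Definition fhomog (d : nat) (F : fsum) : bool := all (fun x => size x.2 == d) F.

Lemma feval_word f b u : feval f [:: (b, u)] = signed b (f u).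
Proof. by rewrite /feval big_seq1. Qed.

Lemma feval_cat f F G : feval f (F ++ G) = feval f F + feval f G.
Proof. by rewrite /feval big_cat. Qed.

Lemma feval_opp f F : feval f (fopp F) = - feval f F.
Proof. by rewrite /feval big_map -sumrN; apply: eq_bigr => x _; rewrite signed_negb. Qed.

Lemma feval_sign f b F : feval f (fsign b F) = signed b (feval f F).
Proof. by case: b; rewrite /= ?feval_opp. Qed.

Lemma feval_flatten (I : Type) f (G : I -> fsum) s :
  feval f (flatten [seq G i | i <- s]) = \sum_(i <- s) feval f (G i).
Proof.
elim: s => [|i s IHs]; first by rewrite big_nil /feval big_nil.
by rewrite big_cons -IHs -feval_cat.
Qed.

Lemma eq_feval f g F : f =1 g -> feval f F = feval g F.
Proof. by move=> fg; apply: eq_bigr => x _; rewrite fg. Qed.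

Lemma eq_in_feval f g F : {in F, forall x, f x.2 = g x.2} -> feval f F = feval g F.
Proof. by move=> fg; apply: eq_big_seq => x /fg ->. Qed.

Lemma feval_add f g F : feval (f \+ g) F = feval f F + feval g F.
Proof. by rewrite /feval -big_split; apply: eq_bigr => x _; rewrite raddfD. Qed.

Lemma feval_oppf f F : feval (\- f) F = - feval f F.
Proof. by rewrite /feval -sumrN; apply: eq_bigr => x _; rewrite raddfN. Qed.

Lemma feval_mull f F G :
  feval f (fmul F G) = feval (fun s => feval (fun t => f (s ++ t)) G) F.
Proof.
rewrite /feval /fmul big_allpairs_dep; apply: eq_bigr => x _.
by rewrite raddf_sum; apply: eq_bigr => y _; rewrite signed_eqb.
Qed.

Lemma feval_mulr f F G :
  feval f (fmul F G) = feval (fun t => feval (fun s => f (s ++ t)) F) G.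
Proof.
rewrite feval_mull /feval; under eq_bigr do rewrite raddf_sum.
rewrite exchange_big /=; apply: eq_bigr => y _.
by rewrite raddf_sum; apply: eq_bigr => x _; rewrite signedC.
Qed.

Lemma feval_mul_wordl f u G : feval f (fmul [:: (true, u)] G) = feval (fun t => f (u ++ t)) G.
Proof. by rewrite feval_mull feval_word. Qed.

Lemma feval_mul_wordr f u G : feval f (fmul G [:: (true, u)]) = feval (fun s => f (s ++ u)) G.
Proof. by rewrite feval_mulr feval_word. Qed.

Lemma fmulA F G H : fequiv (fmul F (fmul G H)) (fmul (fmul F G) H).
Proof.
move=> f; rewrite !feval_mull; apply: eq_feval => s; rewrite feval_mull.
by apply: eq_feval => u; apply: eq_feval => t; rewrite catA.
Qed.

Lemma fmulr1 F : fequiv (fmul F fone) F.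
Proof. by move=> f; rewrite feval_mul_wordr; apply: eq_feval => s; rewrite cats0. Qed.

Lemma fmulDl F G H : fequiv (fmul (F ++ G) H) (fmul F H ++ fmul G H).
Proof. by move=> f; rewrite feval_cat !feval_mull feval_cat. Qed.

Lemma fmulDr F G H : fequiv (fmul F (G ++ H)) (fmul F G ++ fmul F H).
Proof.
by move=> f; rewrite feval_cat !feval_mull -feval_add; apply: eq_feval => s; rewrite feval_cat.
Qed.

Lemma fmulNl F G : fequiv (fmul (fopp F) G) (fopp (fmul F G)).
Proof. by move=> f; rewrite feval_opp !feval_mull feval_opp. Qed.

Lemma fmulNr F G : fequiv (fmul F (fopp G)) (fopp (fmul F G)).
Proof.
by move=> f; rewrite feval_opp !feval_mull -feval_oppf; apply: eq_feval => s; rewrite feval_opp.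
Qed.

Lemma fequiv_refl F : fequiv F F.
Proof. by []. Qed.

Lemma fmul_congr F F' G G' : fequiv F F' -> fequiv G G' -> fequiv (fmul F G) (fmul F' G').
Proof. by move=> FF' GG' f; rewrite !feval_mull FF'; apply: eq_feval => s; apply: GG'. Qed.

Lemma fcomm_congr F F' G G' : fequiv F F' -> fequiv G G' -> fequiv (fcomm F G) (fcomm F' G').
Proof.
move=> FF' GG' f; rewrite /fcomm !feval_cat !feval_opp.
by rewrite (fmul_congr FF' GG') (fmul_congr GG' FF').
Qed.

Lemma fcomm_jacobi F G H :
  fequiv (fcomm F (fcomm G H)) (fcomm (fcomm F G) H ++ fcomm G (fcomm F H)).
Proof.
move=> f; rewrite /fcomm !(feval_cat, feval_opp, fmulDr, fmulDl, fmulNr, fmulNl) !fmulA.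
by rewrite !opprB [RHS]addrACA !subrKA addrACA [RHS]addrACA [X in _ + X = _]addrC.
Qed.

Lemma fprod_cat Fs Gs : fequiv (fprod (Fs ++ Gs)) (fmul (fprod Fs) (fprod Gs)).
Proof.
elim: Fs => [|F Fs IHFs] f /=; first by rewrite feval_mul_wordl.
by rewrite -fmulA; apply: fmul_congr.
Qed.

Lemma fprod_rcons Fs G : fequiv (fprod (rcons Fs G)) (fmul (fprod Fs) G).
Proof. by move=> f; rewrite -cats1 fprod_cat; apply: fmul_congr => // g; apply: fmulr1. Qed.

Lemma fprod_letters u : fprod (map fletter u) = [:: (true, u)].
Proof. by elim: u => //= a u ->. Qed.

Lemma feval_fprod_letters f u F v :
  feval f (fprod (map fletter u ++ F :: map fletter v)) = feval (fun c => f (u ++ c ++ v)) F.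
Proof. by rewrite fprod_cat /= !fprod_letters feval_mul_wordl feval_mul_wordr. Qed.

Lemma feval_fbracket f L k :
  feval f (fbracket L k) = \sum_(w <- words k) signed w.1 (feval f (fprod (map L w.2))).
Proof. by rewrite feval_flatten; apply: eq_bigr => w _; rewrite feval_sign. Qed.

Lemma eq_in_fbracket L L' k :
  (forall j, (j <= k)%N -> L j = L' j) -> fbracket L k = fbracket L' k.
Proof.
move=> LL'; congr flatten; apply/eq_in_map => w /words_perm_iota w_perm.
congr (fsign _ (fprod _)); apply/eq_in_map => j; rewrite (perm_mem w_perm) mem_iota.
by move=> /andP[_]; apply: LL'.
Qed.

Lemma fbracket0 L : fequiv (fbracket L 0) (L 0%N).
Proof. by move=> f; rewrite /fbracket /= cats0 fmulr1. Qed.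

Lemma fbracketS L k : fequiv (fbracket L k.+1) (fcomm (fbracket L k) (L k.+1)).
Proof.
move=> f; rewrite /fcomm feval_cat feval_opp feval_mull feval_mulr !feval_fbracket -sumrB.
rewrite big_flatten big_map; apply: eq_bigr => w _.
by rewrite big_cons big_seq1 signed_negb /= map_rcons fprod_rcons feval_mull feval_mulr.
Qed.

Lemma feval_fcomml f F G : feval f (fcomm F G) =
  feval (fun s => feval (fun t => f (s ++ t)) G - feval (fun t => f (t ++ s)) G) F.
Proof. by rewrite feval_cat feval_opp feval_mull feval_mulr feval_add feval_oppf. Qed.

Lemma feval_fcomm_fbracket f F L k :
  feval f (fcomm F (fbracket L k)) =
  \sum_(i < k.+1) feval f (fbracket (fun j => if j == i then fcomm F (L i) else L j) k).
Proof.
elim: k L f => [|k IHk] L f.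
  by rewrite big_ord1 fbracket0 (fcomm_congr (fequiv_refl F) (fbracket0 L)).
rewrite (fcomm_congr (fequiv_refl F) (fbracketS L k)) fcomm_jacobi feval_cat big_ord_recr /=.
congr (_ + _).
  rewrite feval_fcomml IHk; apply: eq_bigr => i _.
  by rewrite -feval_fcomml fbracketS /= eq_sym ltn_eqF.
rewrite fbracketS eqxx [in RHS](eq_in_fbracket _ (L' := L)) // => j j_le_k.
by rewrite ltn_eqF.
Qed.

Lemma fhomog_cat d F G : fhomog d (F ++ G) = fhomog d F && fhomog d G.
Proof. exact: all_cat. Qed.

Lemma fhomog_opp d F : fhomog d (fopp F) = fhomog d F.
Proof. by rewrite /fhomog all_map. Qed.

Lemma fhomog_mul d e F G : fhomog d F -> fhomog e G -> fhomog (d + e) (fmul F G).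
Proof.
move=> /allP homF /allP homG; apply/allP => _ /allpairsP[[x y] [xF yG ->]].
by rewrite /= size_cat (eqP (homF x xF)) (eqP (homG y yG)).
Qed.

Lemma fhomog_letter a : fhomog 1 (fletter a).
Proof. by []. Qed.

Lemma fhomog_fcomm d e F G : fhomog d F -> fhomog e G -> fhomog (d + e) (fcomm F G).
Proof.
move=> homF homG; rewrite fhomog_cat fhomog_opp fhomog_mul //.
by rewrite addnC fhomog_mul.
Qed.

Lemma fhomog_fprod d Fs : all (fhomog d) Fs -> fhomog (d * size Fs) (fprod Fs).
Proof.
elim: Fs => [_|F Fs IHFs /andP[homF homFs]]; first by rewrite /fhomog /= muln0.
by rewrite /= mulnS fhomog_mul ?IHFs.
Qed.

Lemma fhomog_fbracket d L k :
  (forall j, fhomog d (L j)) -> fhomog (d * k.+1) (fbracket L k).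
Proof.
move=> homL; apply/allP => x /flatten_mapP[w /words_perm_iota w_perm].
have homw : fhomog (d * k.+1) (fsign w.1 (fprod (map L w.2))).
  rewrite -(size_iota 0 k.+1) -(perm_size w_perm) -(size_map L).
  by case: (w.1); rewrite /= ?fhomog_opp fhomog_fprod //; apply/allP => _ /mapP[j _ ->].
exact: (allP homw).
Qed.

End FormalSums.

Arguments fletter {A}.

Lemma feval_zmod_morphism (A : eqType) (M M' : zmodType) (h : M -> M') f (F : fsum A) :
  zmod_morphism h -> h (feval f F) = feval (h \o f) F.
Proof.
move=> hB; pose hA : {additive M -> M'} := HB.pack h (GRing.isZmodMorphism.Build _ _ h hB).
rewrite -[h]/(hA : M -> M') raddf_sum; apply: eq_bigr => -[[] u] _ //=.
exact: (raddfN hA).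
Qed.

Section CommutatorBracket.
Variables (R : fieldType) (V : lmodType R) (n : nat).
Variables (mu : {ffun 'I_n -> V} -> V) (alpha : {linear V -> V}).
Hypothesis mu_multilinear : multilinear mu.
Hypothesis mu_hom_assoc : totally_hom_assoc mu alpha.

Lemma eq_app (m : {ffun 'I_n -> V} -> V) f g :
  (forall j, (j < n)%N -> f j = g j) -> app m f = app m g.
Proof. by move=> fg; rewrite /app; congr m; apply/ffunP => j; rewrite !ffunE fg ?ltn_ord. Qed.

Lemma fext_ffun (f : nat -> V) k : (k < n)%N -> fext [ffun j : 'I_n => f (val j)] k = f k.
Proof. by rewrite /fext; case: insubP => [u _ <- _|/negP]; rewrite ?ffunE. Qed.

Lemma commutatorE a : app (commutator mu) a =
  \sum_(w <- words n.-1) signed w.1 (app mu (nth 0 (map a w.2))).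
Proof.
apply: eq_big_seq => w /words_perm_iota w_perm.
suff -> : app mu (fun j => fext [ffun j : 'I_n => a (val j)] (nth 0%N w.2 j)) =
          app mu (nth 0 (map a w.2)) by case: (w.1).
apply: eq_app => j j_lt_n; rewrite prednK ?(leq_ltn_trans (leq0n j)) // in w_perm.
have j_lt_w : (j < size w.2)%N by rewrite (perm_size w_perm) size_iota.
rewrite (nth_map 0%N) // fext_ffun //.
by have := mem_nth 0%N j_lt_w; rewrite (perm_mem w_perm) mem_iota.
Qed.

Definition mu_word (s : seq V) : V := app mu (nth 0 s).
Definition hom_prod (s : seq V) : V := app mu (assoc_args mu alpha 0 (nth 0 s)).

Lemma app_assoc_args_slot0 p a : (p < n)%N ->
  app mu (assoc_args mu alpha p a) = app mu (assoc_args mu alpha 0 a).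
Proof.
elim: p => [//|p IHp] p_lt_n; rewrite -IHp; last exact: ltnW.
have := mu_hom_assoc a (_ : (0 < p.+1 < n)%N); rewrite /hom_associator /=.
by move=> /(_ p_lt_n) /eqP; rewrite subr_eq0 => /eqP.
Qed.

Lemma hom_prod_cat (pre c suf : seq V) : size c = n -> (size pre + size suf).+1 = n ->
  app mu (nth 0 (map alpha pre ++ mu_word c :: map alpha suf)) = hom_prod (pre ++ c ++ suf).
Proof.
move=> size_c size_n.
have pre_lt_n : (size pre < n)%N by rewrite -size_n ltnS leq_addr.
have middle : app mu (fun k => nth 0 (pre ++ c ++ suf) (size pre + k)) = mu_word c.
  by apply: eq_app => k k_lt_n; rewrite nth_cat ltnNge leq_addr addKn /= nth_cat size_c k_lt_n.
rewrite /hom_prod -(app_assoc_args_slot0 _ pre_lt_n).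
apply: eq_app => j j_lt_n; rewrite /assoc_args nth_cat size_map.
case: ltngtP => [j_lt|j_gt|->];
  [by rewrite (nth_map 0) // nth_cat j_lt | | by rewrite subnn /= middle].
rewrite -(subnSK j_gt) /= (nth_map 0) ?nth_cat ?size_c ?ifF; first congr (alpha (nth _ _ _)).
(* [set] merges convertible [size] terms that [lia] would read as distinct atoms. *)
all: move: j_gt j_lt_n size_n; set sp := size pre; set ss := size suf; lia.
Qed.

Lemma app_slot_feval (pre suf : seq V) f (F : fsum V) : (size pre < n)%N ->
  app mu (nth 0 (pre ++ feval f F :: suf)) =
  feval (fun c => app mu (nth 0 (pre ++ f c :: suf))) F.
Proof.
move=> pre_lt_n; pose a := [ffun j : 'I_n => nth 0 (pre ++ 0 :: suf) j].
have slotE v : app mu (nth 0 (pre ++ v :: suf)) = mu (upd a (Ordinal pre_lt_n) v).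
  rewrite /app; congr mu; apply/ffunP => j; rewrite !ffunE -val_eqE /= !nth_cat.
  by case: ltngtP => [//|j_gt|->]; rewrite ?subnn // -(subnSK j_gt).
apply: (feval_zmod_morphism (h := fun v => app mu (nth 0 (pre ++ v :: suf)))) => x y.
by rewrite !slotE addrC -scaleN1r mu_multilinear scaleN1r addrC.
Qed.

Lemma app_word_hom_prod (a : nat -> V) q (F : fsum V) s :
  (q < n)%N -> fhomog n F -> perm_eq s (iota 0 n) ->
  app mu (nth 0 [seq if j == q then feval mu_word F else alpha (a j) | j <- s]) =
  feval hom_prod (fprod [seq if j == q then F else fletter (a j) | j <- s]).
Proof.
move=> q_lt_n /allP homF s_perm.
have q_s : q \in s by rewrite (perm_mem s_perm) mem_iota.
case/splitPr: q_s s_perm => p1 p2 s_perm.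
have := perm_uniq s_perm; rewrite iota_uniq cat_uniq /= negb_or.
case/and3P => _ /andP[qNp1 _] /andP[qNp2 _].
have size_s : (size p1 + size p2).+1 = n.
  by rewrite -(size_iota 0 n) -(perm_size s_perm) size_cat addnS.
rewrite !map_cat /= !eqxx !map_ifN // !(map_comp alpha a) !(map_comp fletter a).
rewrite app_slot_feval ?size_map -?size_s ?ltnS ?leq_addr // feval_fprod_letters.
by apply: eq_in_feval => x /homF /eqP size_x; rewrite hom_prod_cat ?size_map.
Qed.

Lemma commutator_slotE (a : nat -> V) q (F : fsum V) : (q < n)%N -> fhomog n F ->
  app (commutator mu) (fun j => if j == q then feval mu_word F else alpha (a j)) =
  feval hom_prod (fbracket (fun j => if j == q then F else fletter (a j)) n.-1).
Proof.
move=> q_lt_n homF; rewrite commutatorE feval_fbracket.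
apply: eq_big_seq => w /words_perm_iota; rewrite prednK ?(leq_ltn_trans (leq0n q)) // => w_perm.
by rewrite app_word_hom_prod.
Qed.

Lemma commutator_lettersE (a : nat -> V) :
  app (commutator mu) a = feval mu_word (fbracket (fun j => fletter (a j)) n.-1).
Proof.
rewrite commutatorE feval_fbracket; apply: eq_bigr => w _.
by rewrite (map_comp fletter a) fprod_letters feval_word.
Qed.

Lemma commutator_last_letterE (x : nat -> V) v : (1 < n)%N ->
  app (commutator mu) (fun k => if (k < n.-1)%N then x k else v) =
  feval mu_word (fcomm (fbracket (fun j => fletter (x j)) n.-2) (fletter v)).
Proof.
move=> n_gt1; rewrite commutator_lettersE (_ : n.-1 = n.-2.+1); last by lia.
rewrite fbracketS ltnn.
by rewrite (eq_in_fbracket _ (L' := fun j => fletter (x j))) // => j j_le; rewrite ltnS j_le.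
Qed.

Lemma commutator_hom_multiplicative :
  hom_multiplicative mu alpha -> hom_multiplicative (commutator mu) alpha.
Proof.
move=> alpha_mul a; rewrite /commutator raddf_sum; apply: eq_bigr => w _.
suff alpha_word s : alpha (app mu (fun j => fext a (nth 0%N s j))) =
    app mu (fun j => fext [ffun j => alpha (a j)] (nth 0%N s j)).
  by case: (w.1); rewrite /= ?raddfN; [|congr (- _)]; apply: alpha_word.
rewrite /app alpha_mul; congr mu; apply/ffunP => j; rewrite !ffunE /fext.
by case: insubP => [u _ _|_]; rewrite ?ffunE ?linear0.
Qed.

End CommutatorBracket.

Section HomNambu.
Variables (R : fieldType) (V : lmodType R) (m : nat).
Variables (mu : {ffun 'I_m.+2 -> V} -> V) (alpha : {linear V -> V}).
Hypothesis mu_multilinear : multilinear mu.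
Hypothesis mu_hom_assoc : totally_hom_assoc mu alpha.

Lemma commutator_hom_nambu : hom_nambu (commutator mu) alpha.
Proof.
move=> x y; apply/eqP; rewrite subr_eq0; apply/eqP.
set X := fbracket (fun j => fletter (x j)) m.
set Y := fbracket (fun j => fletter (y j)) m.+1.
have homX : fhomog m.+1 X by rewrite -[m.+1]mul1n fhomog_fbracket.
have homY : fhomog m.+2 Y by rewrite -[m.+2]mul1n fhomog_fbracket.
have homXv v : fhomog m.+2 (fcomm X (fletter v)) by rewrite -addn1 fhomog_fcomm.
rewrite (eq_app _ (g := fun j => if j == m.+1 then feval (mu_word mu) Y else alpha (x j)));
  last first.
  move=> j; rewrite ltnS leq_eqVlt commutator_lettersE /= -/Y.
  by case/predU1P=> [->|j_lt]; rewrite ?ltnn ?eqxx // j_lt ltn_eqF.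
rewrite commutator_slotE // fbracketS eqxx.
rewrite (eq_in_fbracket _ (L' := fun j => fletter (x j))) -/X => [|j j_le]; last first.
  by rewrite ltn_eqF.
rewrite feval_fcomm_fbracket; apply: eq_bigr => i _.
rewrite commutator_last_letterE //.
pose F := fcomm X (fletter (y i)).
rewrite (eq_app _ (g := fun j => if j == i then feval (mu_word mu) F else alpha (y j))).
  by rewrite commutator_slotE ?homXv.
by move=> j _; case: ltngtP.
Qed.

End HomNambu.

Theorem theorem4p5 (R : fieldType) (V : lmodType R) (n : nat)
  (mu : {ffun 'I_n -> V} -> V) (alpha : {linear V -> V}) :
  [pchar R] =i pred0 ->
  (2 <= n)%N ->
  multilinear mu ->
  totally_hom_assoc mu alpha ->
  hom_nambu (commutator mu) alpha /\
  (hom_multiplicative mu alpha -> hom_multiplicative (commutator mu) alpha).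
Proof.
move=> _ n_ge2 mu_multilinear mu_hom_assoc.
split; last exact: commutator_hom_multiplicative.
case: n mu n_ge2 mu_multilinear mu_hom_assoc => [|[|m]] // mu _.
exact: commutator_hom_nambu.
Qed.
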